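(* Let $X$ be an ordered Hausdorff space. Then $nw(Q_{P}(X)) = w(Q_{P}(X)) = |X|$.
   Context: An ordered Hausdorff space is a set carrying a linear order, equipped with its order topology, which is Hausdorff. A function $f\colon X\to Y$ between topological spaces is quasi-continuous at $x\in X$ if for every open $U\ni x$ and every open $V\ni f(x)$ there is a non-empty open $G\subseteq U$ with $f(G)\subseteq V$; $f$ is quasi-continuous if it is quasi-continuous at every point. $Q_{P}(X)$ is the set of all quasi-continuous functions $X\to\mathbb{R}$ with the topology of point-wise convergence, i.e. the subspace topology from $\mathbb{R}^{X}$; basic open sets are $\{g : g(x_i)\in U_i,\ 1\le i\le n\}$ with $x_i\in X$ and $U_i$ open in $\mathbb{R}$. For a space $Z$: $w(Z)=\aleph_0+\min\{|\mathcal{B}| : \mathcal{B}\text{ a base of }Z\}$; $nw(Z)=\aleph_0+\min\{|\mathcal{N}| : \mathcal{N}\text{ a network of }Z\}$, where a network is a family $\mathcal{N}$ of subsets of $Z$ such that for every $z\in Z$ and every open $U\ni z$ there is $N\in\mathcal{N}$ with $z\in N\subseteq U$. $|X|$ is the cardinality of $X$. *)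

From HB Require Import structures.
From mathcomp Require Import all_boot all_order all_algebra.
From mathcomp Require Import all_classical all_reals all_analysis.

Set Implicit Arguments.
Unset Strict Implicit.
Unset Printing Implicit Defensive.

Import Order.TTheory GRing.Theory Num.Theory numFieldNormedType.Exports.
Local Open Scope classical_set_scope.
Local Open Scope card_scope.

Definition quasi_continuous_at {X Y : topologicalType} (f : X -> Y) (x : X) :=
  forall (U : set X) (V : set Y), open U -> U x -> open V -> V (f x) ->
    exists G : set X, [/\ open G, G !=set0, G `<=` U & f @` G `<=` V].

Definition quasi_continuous {X Y : topologicalType} (f : X -> Y) :=
  forall x, quasi_continuous_at f x.

(** Q_P(X): the quasi-continuous real functions on X, as a subspace of the
    space {ptws X -> R} of all functions with pointwise convergence topology
    (set_type carries the subspace = initial topology of the inclusion). *)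
Definition QP (X : topologicalType) (R : realType) : topologicalType :=
  set_type [set f : {ptws X -> R} | @quasi_continuous X R f].

Definition is_base {Z : topologicalType} (B : set (set Z)) :=
  (forall b, B b -> open b) /\
  (forall (z : Z) (U : set Z), open U -> U z ->
     exists b, [/\ B b, b z & b `<=` U]).

Definition is_network {Z : topologicalType} (N : set (set Z)) :=
  forall (z : Z) (U : set Z), open U -> U z ->
    exists n, [/\ N n, n z & n `<=` U].

(** |A| <= aleph_0 + |B|  (the sum is realised as the disjoint union nat + B) *)
Definition card_le_aleph0_plus {T U : Type} (A : set T) (B : set U) :=
  A #<= [set x : nat + U | match x with inl _ => True | inr u => B u end].

(** aleph_0 + |B| <= |A|  (equivalently aleph_0 <= |A| and |B| <= |A|) *)
Definition aleph0_plus_card_le {T U : Type} (B : set U) (A : set T) :=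
  [set: nat] #<= A /\ B #<= A.

(** w(Z) = |A|, where w(Z) = aleph_0 + min{|B| : B a base of Z}. *)
Definition weight_eq {T : Type} (Z : topologicalType) (A : set T) :=
  (exists B : set (set Z), is_base B /\ aleph0_plus_card_le B A) /\
  (forall B : set (set Z), is_base B -> card_le_aleph0_plus A B).

(** nw(Z) = |A|, where nw(Z) = aleph_0 + min{|N| : N a network of Z}. *)
Definition netweight_eq {T : Type} (Z : topologicalType) (A : set T) :=
  (exists N : set (set Z), is_network N /\ aleph0_plus_card_le N A) /\
  (forall N : set (set Z), is_network N -> card_le_aleph0_plus A N).

(* Lower bound: to each x in X attach the quasi-continuous step function
   step x (0 left of x, jumping at x) and its neighbourhood
   W_x = {g | |g x - step x x| < 1/2}.  If step y is in W_x and step x is in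
   W_y then x = y, so distinct points need distinct members of any network.
   Upper bound: the rational boxes {g | a_i < g x_i < b_i} form a base indexed
   by finite sequences in X * Q * Q, and there are only |X| of them because
   |T * T| = |T| for every infinite T, which follows from Zorn's lemma applied
   to graphs of injections A * A -> A with A a subset of T. *)

From mathcomp Require Import all_boot all_order all_algebra.
From mathcomp Require Import all_classical all_reals all_analysis.
From mathcomp Require Import lra.

Set Implicit Arguments.
Unset Strict Implicit.
Unset Printing Implicit Defensive.

Import Order.TTheory GRing.Theory Num.Theory numFieldNormedType.Exports.
Local Open Scope classical_set_scope.
Local Open Scope card_scope.

Lemma total_on_ub2 {V} (F : set (set V)) (K1 K2 : set V) : total_on F subset ->
  F K1 -> F K2 -> exists2 K, F K & K1 `|` K2 `<=` K.
Proof.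
move=> Ftot FK1 FK2.
have [/setUidPr K12|/setUidPl K21] := Ftot _ _ FK1 FK2.
  by exists K2; rewrite ?K12.
by exists K1; rewrite ?K21.
Qed.

Section card_le_functions.
Context {T U : Type}.
Implicit Types (A : set T) (B : set U).

Lemma set_inj_card_le A B (f : T -> U) : set_fun A B f -> set_inj A f -> A #<= B.
Proof.
move=> fAB finj; have [g] : $|{injfun A >-> B}| by apply/injfunPex; exists f.
exact: inj_card_le.
Qed.

Lemma card_le_injfun (u0 : U) A B : A #<= B ->
  exists2 f : T -> U, set_fun A B f & set_inj A f.
Proof.
move=> /card_leP[f].
pose g x := if pselect (A x) is left Ax then set_val (f (SigSub (mem_set Ax))) else u0.
exists g => [x Ax|x y /set_mem Ax /set_mem Ay]; rewrite /g.
  by case: pselect => // Ax'; apply: set_mem; exact: valP.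
case: pselect => // Ax'; case: pselect => // Ay' fxy.
by case: (inj (mem_set I) (mem_set I) (val_inj fxy)).
Qed.

Lemma card_leT_inj (u0 : U) :
  [set: T] #<= [set: U] -> exists f : T -> U, injective f.
Proof.
by move=> /(card_le_injfun u0)[f _ finj]; exists f => x y; apply: finj; rewrite inE.
Qed.

Lemma card_le_setN0 A B : A #<= B -> A !=set0 -> B !=set0.
Proof.
move=> + [a Aa]; apply: contraPP => /set0P/negP/negPn/eqP ->.
by move=> /card_le0P A0; rewrite A0 in Aa.
Qed.

Lemma card_le_graph A B (K : set (T * U)) :
  (forall a, A a -> exists2 b, B b & K (a, b)) ->
  (forall a a' b, K (a, b) -> K (a', b) -> a = a') -> A #<= B.
Proof.
move=> Ktot Kinj; have [->|/set0P[a0 /Ktot[b0 _ _]]] := eqVneq A set0.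
  exact: card_ge0.
have /choice[f fK] : forall a, exists b, A a -> B b /\ K (a, b).
  move=> a; have [/Ktot[b Bb Kab]|nAa] := pselect (A a); first by exists b.
  by exists b0.
apply: (@set_inj_card_le _ _ f) => [a /fK[]//|a a' /set_mem/fK[_ Kab]].
by move=> /set_mem/fK[_ Ka'b'] fa; rewrite fa in Kab; exact: Kinj Kab Ka'b'.
Qed.

End card_le_functions.

Lemma card_le_total {T U} (A : set T) (B : set U) : A #<= B \/ B #<= A.
Proof.
pose P := [set K : set (T * U) | [/\ K `<=` A `*` B,
  forall a b b', K (a, b) -> K (a, b') -> b = b' &
  forall a a' b, K (a, b) -> K (a', b) -> a = a']].
have [K [[KAB Kfun Kinj] Kmax]] : exists K, P K /\ forall K', K `<` K' -> ~ P K'.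
  apply: Zorn_bigcup => F FP Ftot; split.
  - by move=> p [K /FP[+ _ _]]; apply.
  - move=> a b b' [K1 FK1 K1ab] [K2 FK2 K2ab'].
    have [K FK] := total_on_ub2 Ftot FK1 FK2; rewrite subUset => -[K1K K2K].
    by have [_ Kf _] := FP _ FK; exact: Kf (K1K _ K1ab) (K2K _ K2ab').
  - move=> a a' b [K1 FK1 K1ab] [K2 FK2 K2a'b].
    have [K FK] := total_on_ub2 Ftot FK1 FK2; rewrite subUset => -[K1K K2K].
    by have [_ _ Ki] := FP _ FK; exact: Ki (K1K _ K1ab) (K2K _ K2a'b).
have [Kdom|/existsNP[a0 /not_implyP[Aa0 Na0]]] :=
  pselect (forall a, A a -> exists2 b, B b & K (a, b)).
  by left; exact: card_le_graph Kdom Kinj.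
right; apply: (@card_le_graph _ _ _ _ [set p | K (p.2, p.1)]); last first.
  by move=> b b' a; exact: Kfun.
move=> b Bb; apply: contrapT => Nb.
have Ka0 b' : ~ K (a0, b') by move=> Ka0b'; apply: Na0; exists b'; case: (KAB _ Ka0b').
have Kb a : ~ K (a, b) by move=> Kab; apply: Nb; exists a; case: (KAB _ Kab).
apply: (Kmax (K `|` [set (a0, b)])); [split=> [p Kp|]; first by left|split].
- by move=> /(_ (a0, b) (or_intror erefl))/Ka0.
- by move=> p [/KAB//|->].
- move=> a c c' [Kac|/pair_equal_spec[? ?]] [Kac'|/pair_equal_spec[? ?]];
    subst => //; [exact: Kfun Kac Kac'|case: (Ka0 _ Kac)|case: (Ka0 _ Kac')].
- move=> a a' c [Kac|/pair_equal_spec[? ?]] [Ka'c|/pair_equal_spec[? ?]];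
    subst => //; [exact: Kinj Kac Ka'c|case: (Kb _ Kac)|case: (Kb _ Ka'c)].
Qed.


Lemma Zorn_bigcup_above {V} (P : set (set V)) (A0 : set V) : P A0 ->
    (forall F, F `<=` P -> total_on F subset -> P (\bigcup_(X in F) X)) ->
  exists A, [/\ P A, A0 `<=` A & forall B, A `<` B -> ~ P B].
Proof.
move=> PA0 Pchain.
have [M [PM Mmax]] : exists M, P (A0 `|` M) /\ forall B, M `<` B -> ~ P (A0 `|` B).
  apply: Zorn_bigcup => F FP Ftot /=.
  have -> : A0 `|` \bigcup_(X in F) X = \bigcup_(X in A0 |` (setU A0 @` F)) X.
    apply/seteqP; split=> [x [A0x|[X FX Xx]]|x [_ [->|[X FX <-]]]].
    - by exists A0; [left|].
    - by exists (A0 `|` X); [right; exists X|right].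
    - by left.
    - by move=> [A0x|Xx]; [left|right; exists X].
  apply: Pchain => [_ [->|[X FX <-]]|]; [exact: PA0|exact: FP|].
  move=> _ _ [->|[X FX <-]] [->|[Y FY <-]];
    try by [left|left; exact: subsetUl|right; exact: subsetUl].
  by case: (Ftot _ _ FX FY) => [XY|YX]; [left|right]; exact: setUS.
exists (A0 `|` M); split=> [//||B [MB NBM] PB]; first exact: subsetUl.
apply: (Mmax B); last by rewrite (setUidr (subset_trans (@subsetUl _ A0 M) MB)).
by split=> [x Mx|BM]; [apply: MB; right|apply: NBM => x /BM Mx; right].
Qed.

Lemma card_le_setX {T T' U U'} (A : set T) (A' : set T') (B : set U) (B' : set U') :
  A #<= A' -> B #<= B' -> A `*` B #<= A' `*` B'.
Proof.
have [->|/set0P[[a b] [Aa Bb]]] := eqVneq (A `*` B) set0.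
  by move=> _ _; exact: card_ge0.
move=> AA' BB'.
have [a' _] := card_le_setN0 AA' (ex_intro _ a Aa).
have [b' _] := card_le_setN0 BB' (ex_intro _ b Bb).
have [f fA finj] := card_le_injfun a' AA'; have [g gB ginj] := card_le_injfun b' BB'.
apply: (@set_inj_card_le _ _ _ _ (fun p => (f p.1, g p.2))).
  by move=> [x y] [/fA ? /gB ?].
move=> [x y] [x' y'] /set_mem[/= Ax By] /set_mem[/= Ax' By'] [fx gy].
by rewrite (finj x x' (mem_set Ax) (mem_set Ax') fx)
  (ginj y y' (mem_set By) (mem_set By') gy).
Qed.

Lemma card_le_setU {T U} (A : set T) (B C : set U) :
    A `*` A #<= A -> [set: bool] #<= A -> B #<= A -> C #<= A ->
  B `|` C #<= A.
Proof.
move=> AA boolA BA CA; have [a0 _] := card_le_setN0 boolA (ex_intro _ true I).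
have [e eA einj] := card_le_injfun a0 boolA.
have [k kA kinj] := card_le_injfun a0 BA; have [k' k'A k'inj] := card_le_injfun a0 CA.
apply: (card_le_trans _ AA).
pose h x := if pselect (B x) is left _ then (k x, e true) else (k' x, e false).
apply: (@set_inj_card_le _ _ _ _ h) => [x|x y /set_mem BCx /set_mem BCy]; rewrite /h.
  by case: pselect => [Bx _|_ [//|Cx]]; split;
    [exact: kA|exact: eA|exact: k'A|exact: eA].
have ne b b' : e b = e b' -> b = b' by apply: einj; rewrite in_setT.
case: (pselect (B x)) => Bx; case: (pselect (B y)) => By /pair_equal_spec[kxy /ne eb];
  [exact: kinj _ _ (mem_set Bx) (mem_set By) kxy|by []|by []|].
by apply: k'inj kxy; apply: mem_set; [case: BCx|case: BCy].
Qed.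

Section pairing_graph.
Variable T : Type.
Implicit Types (G : set (T * T * T)) (D : set T).

Definition graph_support G : set T := [set a | exists c, G ((a, a), c)].

(* G is the graph of an injection from A * A into A, where A is the set of
   those a for which (a, a) is in the domain of G. *)
Definition pairing_graph G := [/\
  forall p c c', G (p, c) -> G (p, c') -> c = c',
  forall p p' c, G (p, c) -> G (p', c) -> p = p',
  forall a b c, G ((a, b), c) ->
    [/\ graph_support G a, graph_support G b & graph_support G c] &
  forall a b, graph_support G a -> graph_support G b -> exists c, G ((a, b), c)].

Lemma pairing_graph_bigcup F : F `<=` pairing_graph -> total_on F subset ->
  pairing_graph (\bigcup_(G in F) G).
Proof.
move=> FP Ftot.
have supp G : F G -> graph_support G `<=` graph_support (\bigcup_(G in F) G).
  by move=> FG a [c Gc]; exists c, G.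
split.
- move=> p c c' [G1 FG1 G1c] [G2 FG2 G2c'].
  have [G FG] := total_on_ub2 Ftot FG1 FG2; rewrite subUset => -[G1G G2G].
  by have [Gf _ _ _] := FP _ FG; exact: Gf (G1G _ G1c) (G2G _ G2c').
- move=> p p' c [G1 FG1 G1c] [G2 FG2 G2c].
  have [G FG] := total_on_ub2 Ftot FG1 FG2; rewrite subUset => -[G1G G2G].
  by have [_ Gi _ _] := FP _ FG; exact: Gi (G1G _ G1c) (G2G _ G2c).
- move=> a b c [G FG Gabc]; have [_ _ Gs _] := FP _ FG.
  by have [Sa Sb Sc] := Gs _ _ _ Gabc; split; apply: supp FG _ _.
- move=> a b [c1 [G1 FG1 G1a]] [c2 [G2 FG2 G2b]].
  have [G FG] := total_on_ub2 Ftot FG1 FG2; rewrite subUset => -[G1G G2G].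
  have [_ _ _ Gt] := FP _ FG.
  have [c Gc] := Gt a b (ex_intro _ c1 (G1G _ G1a)) (ex_intro _ c2 (G2G _ G2b)).
  by exists c, G.
Qed.

Lemma pairing_graph_card G : pairing_graph G ->
  graph_support G `*` graph_support G #<= graph_support G.
Proof.
move=> [_ Gi Gs Gt]; apply: (@card_le_graph _ _ _ _ G) => // -[a b] [/= Sa Sb].
by have [c Gc] := Gt a b Sa Sb; exists c => //; have [] := Gs _ _ _ Gc.
Qed.

Lemma pairing_graph_adjoin G D (code : T -> T -> T) : pairing_graph G ->
    graph_support G `<=` D ->
    (forall u v, D u -> D v -> D (code u v) /\ ~ graph_support G (code u v)) ->
    (forall u v u' v', D u -> D v -> D u' -> D v' ->
      code u v = code u' v' -> u = u' /\ v = v') ->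
  pairing_graph (G `|` [set t | [/\ D t.1.1, D t.1.2,
    ~ (graph_support G t.1.1 /\ graph_support G t.1.2) & t.2 = code t.1.1 t.1.2]]).
Proof.
set A := graph_support G; set H := _ `|` _ => -[Gf Gi Gs Gt] AD codeD code_inj.
have suppH : graph_support H = D.
  apply/seteqP; split=> [a [c [Gc|[]//]]|a Da]; first by apply: AD; exists c.
  have [[c Gc]|NAa] := pselect (A a); first by exists c; left.
  by exists (code a a); right; split=> // -[].
rewrite /pairing_graph suppH; split.
- move=> [a b] c c' [Gc|/=[_ _ NAab ->]] [Gc'|/=[_ _ NAab' ->]] //.
  + exact: Gf Gc Gc'.
  + by have [Aa Ab _] := Gs _ _ _ Gc; case: NAab'.
  + by have [Aa Ab _] := Gs _ _ _ Gc'; case: NAab.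
- move=> [a b] [a' b'] c [Gc|/=[Da Db _ ->]] [Gc'|/=[Da' Db' _ cE]].
  + exact: Gi Gc Gc'.
  + by have [_ _ Ac] := Gs _ _ _ Gc; case: (codeD _ _ Da' Db'); rewrite -cE.
  + by have [_ _ Ac] := Gs _ _ _ Gc'; case: (codeD _ _ Da Db).
  + by have [-> ->] := code_inj _ _ _ _ Da Db Da' Db' cE.
- move=> a b c [Gc|/=[Da Db _ ->]]; last by split=> //; have [] := codeD _ _ Da Db.
  by have [Aa Ab Ac] := Gs _ _ _ Gc; split; exact: AD.
- move=> a b Da Db; have [[Aa Ab]|NAab] := pselect (A a /\ A b).
    by have [c Gc] := Gt a b Aa Ab; exists c; left.
  by exists (code a b); right.
Qed.

(* If |A| <= |T \ A|, let B be an injective copy of A outside A: the new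
   pairs of (A + B) * (A + B) are at most |A| = |B| many, so the injection can
   be extended by sending them into B. *)
Lemma pairing_graph_extend G : pairing_graph G ->
    [set: bool] #<= graph_support G -> graph_support G #<= ~` graph_support G ->
  exists2 H, G `<` H & pairing_graph H.
Proof.
set A := graph_support G => PG boolA ACA.
have [a0 Aa0] := card_le_setN0 boolA (ex_intro _ true I).
have [m mA minj] := card_le_injfun a0 ACA.
have AA := pairing_graph_card PG; have [g gA ginj] := card_le_injfun a0 AA.
set D := A `|` m @` A.
have [q qA qinj] :=
  card_le_injfun a0 (card_le_setU AA boolA (card_lexx A) (card_image_le m A)).
pose code u v := m (g (q u, q v)).
have gqA u v : D u -> D v -> A (g (q u, q v)).
  by move=> Du Dv; apply: gA; split; exact: qA.
have codeD u v : D u -> D v -> D (code u v) /\ ~ A (code u v).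
  move=> Du Dv; split; last exact/mA/gqA.
  by right; exists (g (q u, q v)); first exact: gqA.
have code_inj u v u' v' : D u -> D v -> D u' -> D v' ->
    code u v = code u' v' -> u = u' /\ v = v'.
  move=> Du Dv Du' Dv'.
  move=> /(minj _ _ (mem_set (gqA _ _ Du Dv)) (mem_set (gqA _ _ Du' Dv'))).
  move=> /(ginj _ _ (mem_set (conj (qA _ Du) (qA _ Dv)))
                    (mem_set (conj (qA _ Du') (qA _ Dv')))).
  move=> /pair_equal_spec[quq' qvq']; split.
    exact: qinj _ _ (mem_set Du) (mem_set Du') quq'.
  exact: qinj _ _ (mem_set Dv) (mem_set Dv') qvq'.
apply: ex_intro2 (pairing_graph_adjoin PG (@subsetUl _ A _) codeD code_inj).
split=> [t Gt|/(_ ((m a0, m a0), code (m a0) (m a0))) HG]; first by left.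
have Dma0 : D (m a0) by right; exists a0.
apply: (mA _ Aa0); exists (code (m a0) (m a0)).
by apply: HG; right; split=> // -[+ _]; exact: mA.
Qed.

Lemma infinite_card_setX : infinite_set [set: T] -> [set: T * T] #<= [set: T].
Proof.
move=> /[dup] /infinite_setN0[t0 _] /infiniteP natT.
have [e einj] := card_leT_inj t0 natT.
pose E0 := [set t | exists i j, t = ((e i, e j), e (pickle (i, j)))].
have suppE0 : graph_support E0 = range e.
  apply/seteqP; split=> [a [c [i [j /pair_equal_spec[/pair_equal_spec[-> _] _]]]]|].
    by exists i.
  by move=> _ [i _ <-]; exists (e (pickle (i, i))), i, i.
have PE0 : pairing_graph E0.
  rewrite /pairing_graph suppE0; split.
  - move=> p c c' [i [j /pair_equal_spec[-> ->]]] [i' [j']].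
    by move=> /pair_equal_spec[/pair_equal_spec[/einj <- /einj <-] ->].
  - move=> p p' c [i [j /pair_equal_spec[-> ->]]] [i' [j']].
    by move=> /pair_equal_spec[-> /einj/(pcan_inj pickleK)[<- <-]].
  - move=> a b c [i [j /pair_equal_spec[/pair_equal_spec[-> ->] ->]]].
    by split; [exists i|exists j|exists (pickle (i, j))].
  - by move=> _ _ [i _ <-] [j _ <-]; exists (e (pickle (i, j))), i, j.
have [G [PG E0G Gmax]] := Zorn_bigcup_above PE0 pairing_graph_bigcup.
set A := graph_support G.
have eA i : A (e i).
  have [c E0c] : graph_support E0 (e i) by rewrite suppE0; exists i.
  by exists c; exact: E0G.
have boolA : [set: bool] #<= A.
  by apply: (@set_inj_card_le _ _ _ _ (fun b : bool => e b)) => // [[] []] _ _ /einj.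
have TA : [set: T] #<= A.
  have [ACA|CAA] := card_le_total A (~` A).
    by have [H GH PH] := pairing_graph_extend PG boolA ACA; case: (Gmax _ GH PH).
  rewrite -(setUv A).
  exact: card_le_setU (pairing_graph_card PG) boolA (card_lexx A) CAA.
rewrite -setXTT; apply: card_le_trans (card_le_setX TA TA) _.
exact: card_le_trans (pairing_graph_card PG) (card_leT A).
Qed.

End pairing_graph.

Lemma infinite_card_setX_countable {T} {U : countType} :
  infinite_set [set: T] -> [set: T * U] #<= [set: T].
Proof.
move=> Tinf; apply: (card_le_trans _ (infinite_card_setX Tinf)); rewrite -!setXTT.
apply: card_le_setX (card_lexx _) _.
exact: card_le_trans (countableP _) (proj1 (infiniteP _) Tinf).
Qed.

Lemma infinite_card_seq {T U} : infinite_set [set: T] -> [set: U] #<= [set: T] ->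
  [set: seq U] #<= [set: T].
Proof.
move=> Tinf UT; have [t0 _] := infinite_setN0 Tinf.
have [e einj] := card_leT_inj t0 (proj1 (infiniteP _) Tinf).
have [pr prinj] := card_leT_inj t0 (infinite_card_setX Tinf).
have [f finj] := card_leT_inj t0 UT.
pose fix enc s := if s is u :: s' then pr (e 1, pr (f u, enc s')) else pr (e 0, e 0).
apply: (@set_inj_card_le _ _ _ _ enc) => // s s' _ _.
elim: s s' => [|u s IH] [|u' s'] //= /prinj/pair_equal_spec[/einj //].
by move=> _ /prinj/pair_equal_spec[/finj -> /IH ->].
Qed.

Local Open Scope ring_scope.

Section rational_boxes.
Context {X : topologicalType} {R : realType}.

Definition rat_box (s : seq (X * (rat * rat))) : set {ptws X -> R} :=
  [set g | forall t, t \in s -> ratr t.2.1 < g t.1 < ratr t.2.2].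

Lemma open_eval (x : X) (O : set R) :
  open O -> open [set g : {ptws X -> R} | O (g x)].
Proof.
move=> oO; have evc : continuous (fun g : {ptws X -> R} => g x).
  by move=> f; have /pointwise_cvgP := @cvg_id _ (nbhs f); apply.
exact: (proj1 (continuousP _) evc _ oO).
Qed.

Lemma rat_box_open s : open (rat_box s).
Proof.
elim: s => [|t s IH].
  suff -> : rat_box [::] = setT by exact: openT.
  by apply/seteqP; split=> // g _ t; rewrite in_nil.
have -> : rat_box (t :: s) =
    [set g | ratr t.2.1 < g t.1 < ratr t.2.2] `&` rat_box s.
  apply/seteqP; split=> [g gs|g [gt gs] u]; last by rewrite inE => /orP[/eqP ->|/gs].
  by split=> [|u us]; apply: gs; rewrite inE ?us ?orbT ?eqxx.
apply: openI => //; apply: (open_eval t.1 (O := `]ratr t.2.1, ratr t.2.2[%classic)).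
exact: interval_open.
Qed.

Lemma nbhs_rat_itv (v : R) (A : set R) : nbhs v A ->
  exists a b : rat, ratr a < v < ratr b /\ `]ratr a, ratr b[%classic `<=` A.
Proof.
move=> /nbhs_ballP[e /= e0 veA].
have /rat_in_itvoo[a] : v - e < v by rewrite ltrBlDr ltrDl.
have /rat_in_itvoo[b] : v < v + e by rewrite ltrDl.
rewrite !in_itv /= => /andP[vb be] /andP[ea av].
exists a, b; split=> [|r /=]; first by rewrite av vb.
rewrite in_itv /= => /andP[ar rb]; apply: veA.
rewrite /ball /= ltr_distlC; apply/andP; split; lra.
Qed.

Lemma ptws_nbhs_rat_box (f : {ptws X -> R}) (V : set {ptws X -> R}) :
  nbhs f V -> exists2 s, rat_box s f & rat_box s `<=` V.
Proof.
pose F := filter_from [set s | rat_box s f] rat_box.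
have FF : Filter F.
  apply: filter_from_filter; first by exists [::] => t; rewrite in_nil.
  move=> s1 s2 s1f s2f; exists (s1 ++ s2).
    by move=> t; rewrite mem_cat => /orP[/s1f|/s2f].
  by move=> g gs; split=> t ts; apply: gs; rewrite mem_cat ts ?orbT.
have : {ptws, F --> f}.
  apply/pointwise_cvgP => x A /nbhs_rat_itv[a [b [/andP[af fb] abA]]].
  exists [:: (x, (a, b))] => [t|g /(_ (x, (a, b)))]; rewrite mem_seq1.
    by move=> /eqP -> /=; rewrite af fb.
  by move=> /(_ (eqxx _)) /= /andP[ag gb]; apply: abA; rewrite /= in_itv /= ag gb.
by move=> /(_ V) Ff /Ff [s sf sV]; exists s.
Qed.

End rational_boxes.

Lemma is_base_network {Z : topologicalType} (B : set (set Z)) :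
  is_base B -> is_network B.
Proof. by case. Qed.

Definition weakly_separated {Z : topologicalType} {I : Type} (z : I -> Z)
    (W : I -> set Z) :=
  [/\ forall i, open (W i), forall i, W i (z i) &
      forall i j, W i (z j) -> W j (z i) -> i = j].

Lemma weakly_separated_card_network {Z : topologicalType} {I : Type} (z : I -> Z)
    (W : I -> set Z) (N : set (set Z)) :
  weakly_separated z W -> is_network N -> [set: I] #<= N.
Proof.
move=> [oW Wz Wsep] netN.
have /choice[n nP] : forall i, exists n, [/\ N n, n (z i) & n `<=` W i].
  by move=> i; exact: netN (oW i) (Wz i).
apply: (@set_inj_card_le _ _ _ _ n) => [i _|i j _ _ nij]; first by have [] := nP i.
have [_ niz niW] := nP i; have [_ njz njW] := nP j.
by apply: Wsep; [apply: niW; rewrite nij|apply: njW; rewrite -nij].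
Qed.

Section QP_base.
Context {X : topologicalType} {R : realType}.

Lemma QP_open_preimage (V : set {ptws X -> R}) :
  open V -> @open (QP X R) (set_val @^-1` V).
Proof. by move=> oV; exists V. Qed.

Definition QP_rat_box s : set (QP X R) := set_val @^-1` rat_box s.

Lemma QP_rat_box_base : is_base (range QP_rat_box).
Proof.
split=> [_ [s _ <-]|f _ [V oV <-] Vf]; first exact/QP_open_preimage/rat_box_open.
have [s sf sV] := ptws_nbhs_rat_box (open_nbhs_nbhs (conj oV Vf)).
by exists (QP_rat_box s); split=> // g /sV.
Qed.

End QP_base.

Lemma quasi_continuous_at_const {X Y : topologicalType} (f : X -> Y) (x : X) :
    (forall U, open U -> U x ->
      exists G, [/\ open G, G !=set0, G `<=` U & forall z, G z -> f z = f x]) ->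
  quasi_continuous_at f x.
Proof.
move=> fG U V oU Ux oV Vfx; have [G [oG G0 GU Gf]] := fG U oU Ux.
by exists G; split=> // _ [z Gz <-]; rewrite Gf.
Qed.

Section step_functions.
Context {d : Order.disp_t} {X : orderTopologicalType d} {R : realType}.
Implicit Types x y z : X.

Definition right_isolated x :=
  exists2 W : set X, open W /\ W x & W `<=` [set z | (z <= x)%O].

(* The value at x is chosen so that step x is quasi-continuous at x, and the
   value 2 - jump x to the right of x makes the neighbourhoods below weakly
   separating: step y near step x at x < y forces jump x = 0, and then
   step x y = 2 is far from jump y. *)
Definition jump x : R := if pselect (right_isolated x) is left _ then 0 else 1.

Definition step x z : R :=
  if (z < x)%O then 0 else if (x < z)%O then 2 - jump x else jump x.

Lemma step_lt x z : (z < x)%O -> step x z = 0.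
Proof. by rewrite /step => ->. Qed.

Lemma step_gt x z : (x < z)%O -> step x z = 2 - jump x.
Proof. by move=> xz; rewrite /step xz ltNge (ltW xz). Qed.

Lemma stepxx x : step x x = jump x.
Proof. by rewrite /step ltxx. Qed.

Lemma step_quasi_continuous x : quasi_continuous (step x).
Proof.
move=> y; apply: quasi_continuous_at_const => U oU Uy.
have [yx|xy|<-] := ltgtP y x.
- exists (U `&` `]-oo, x[); split=> [||z []//|z [_]].
  + exact: openI oU (@lray_open _ _ _).
  + by exists y; split=> //=; rewrite in_itv.
  + by rewrite /= in_itv /= => zx; rewrite !step_lt.
- exists (U `&` `]x, +oo[); split=> [||z []//|z [_]].
  + exact: openI oU (@rray_open _ _ _).
  + by exists y; split=> //=; rewrite in_itv /= andbT.
  + by rewrite /= in_itv /= andbT => xz; rewrite !step_gt.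
have [[W [oW Wy] Wle]|Nri] := pselect (right_isolated y).
  exists (U `&` W); split; [exact: openI|by exists y|by move=> z []|].
  move=> z [_ /Wle]; rewrite /= le_eqVlt => /orP[/eqP ->//|zy].
  by rewrite step_lt // stepxx /jump; case: pselect => // -[]; exists W.
exists (U `&` `]y, +oo[); split=> [||z []//|z [_]].
- exact: openI oU (@rray_open _ _ _).
- apply: contrapT => NG; apply: Nri; exists U => // z Uz; rewrite /= leNgt.
  by apply/negP => yz; apply: NG; exists z; split=> //=; rewrite in_itv /= andbT.
- rewrite /= in_itv /= andbT => yz.
  by rewrite step_gt // stepxx /jump; case: pselect => //; lra.
Qed.

Definition step_QP x : QP X R := SigSub (mem_set (@step_quasi_continuous x)).

Lemma step_QPE x : set_val (step_QP x) = step x :> (X -> R).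
Proof. by []. Qed.

Definition step_nbhs x : set (QP X R) :=
  set_val @^-1` [set g : {ptws X -> R} | ball (jump x) 2^-1 (g x)].

Lemma step_weakly_separated : weakly_separated step_QP step_nbhs.
Proof.
split=> [x|x|]; first by apply/QP_open_preimage/open_eval; exact: ball_open.
  by rewrite /step_nbhs /= step_QPE stepxx; exact: ballxx.
move=> x y; wlog xy : x y / (x < y)%O => [hwlog Nxy Nyx|].
  have [lt|gt|//] := ltgtP x y; first exact: hwlog lt Nxy Nyx.
  exact/esym/(hwlog _ _ gt Nyx Nxy).
rewrite /step_nbhs /ball /= !step_QPE (step_lt xy) (step_gt xy) /jump.
case: pselect; case: pselect => _ _ /ltr_normlP[? ?] /ltr_normlP[? ?].
all: by exfalso; clear xy; lra.
Qed.

End step_functions.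

Lemma card_le_aleph0_plusW {T U} (A : set T) (B : set U) :
  A #<= B -> card_le_aleph0_plus A B.
Proof.
move=> AB; apply: (card_le_trans AB).
by apply: (@set_inj_card_le _ _ _ _ inr) => // x y _ _ [].
Qed.

Lemma QP_rat_box_card {X : topologicalType} {R : realType} :
  infinite_set [set: X] -> range (@QP_rat_box X R) #<= [set: X].
Proof.
move=> Xinf; apply: (card_le_trans (card_image_le _ _)).
exact: infinite_card_seq Xinf (infinite_card_setX_countable Xinf).
Qed.

Theorem mainTheorem1 (R : realType) (d : Order.disp_t)
  (X : orderTopologicalType d) :
  hausdorff_space X -> infinite_set [set: X] ->
  netweight_eq (QP X R) [set: X] /\ weight_eq (QP X R) [set: X].
Proof.
(* Order topologies are Hausdorff anyway. *)
move=> _ Xinf.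
have netX (N : set (set (QP X R))) :
    is_network N -> card_le_aleph0_plus [set: X] N.
  by move=> /(weakly_separated_card_network step_weakly_separated)/card_le_aleph0_plusW.
have natX := proj1 (infiniteP _) Xinf.
have base := @QP_rat_box_base X R; have baseX := @QP_rat_box_card X R Xinf.
split; split.
- by exists (range QP_rat_box); split; [exact: is_base_network|].
- exact: netX.
- by exists (range QP_rat_box).
- by move=> B /is_base_network; exact: netX.
Qed.
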